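(* Let $(A,u)$ be a unital Abelian po-group. Consider the functor $\mathbf{POG}_u\to(A,u)\downarrow\mathbf{POG}_u$ sending $(B,v)$ to $\iota_{A,B}\colon (A,u)\to (A\otimes B,u\otimes v)$, $a\mapsto a\otimes v$. This functor admits a right adjoint which sends an object $h\colon(A,u)\to(B,v)$ of $(A,u)\downarrow\mathbf{POG}_u$ to the unital po-group $([A,B]_h,h)$.
   Context: $\mathbf{POG}_u$ is the category of Abelian partially ordered groups $A$ with an order unit $u\in A^+$ (for every $x\in A$ there is $n\in\mathbb{N}$ with $x\le nu$); morphisms are order-preserving group homomorphisms preserving the order units. The tensor product of $(A,u)$ and $(B,v)$ in $\mathbf{POG}_u$ is $(A\otimes B,u\otimes v)$, where $A\otimes B$ is the tensor product of Abelian groups with positive cone consisting of all sums $a_1\otimes b_1+\dots+a_n\otimes b_n$ with $a_i\in A^+$, $b_i\in B^+$; it is universal for bihomomorphisms (maps additive in each variable, mapping $A^+\times B^+$ into the positive cone, and sending $(u,v)$ to the unit). $(A,u)\downarrow\mathbf{POG}_u$ is the under category (objects: morphisms out of $(A,u)$; morphisms: commuting triangles). $[A,B]$ denotes the Abelian group of all group homomorphisms $A\to B$, partially ordered by the cone of order-preserving homomorphisms; for $h\colon(A,u)\to(B,v)$, $[A,B]_h$ is the largest subgroup of $[A,B]$ in which $h$ is an order unit, i.e. the set of $f\in[A,B]$ with $-nh\le f\le nh$ for some $n\in\mathbb{N}$. *)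

From HB Require Import structures.
From mathcomp Require Import all_boot all_algebra.
From mathcomp Require Import boolp classical_sets functions.

Set Implicit Arguments.
Unset Strict Implicit.
Unset Printing Implicit Defensive.

Import GRing.Theory.
Local Open Scope ring_scope.

(* x <= y  is  pos (y - x).                                                  *)
Record pog := POG {
  pog_car :> zmodType;
  pos : pog_car -> Prop;
  pos0 : pos 0;
  posD : forall x y, pos x -> pos y -> pos (x + y);
  pos_anti : forall x, pos x -> pos (- x) -> x = 0 }.

Definition is_order_unit (G : pog) (u : G) : Prop :=
  pos u /\ forall x : G, exists n : nat, pos (u *+ n - x).

Record upog := UPOG {
  upog_pog :> pog;
  ounit : upog_pog;
  ounitP : is_order_unit ounit }.

Definition additive_fun (X Y : zmodType) (f : X -> Y) : Prop :=
  forall x y, f (x + y) = f x + f y.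

Definition order_pres (X Y : pog) (f : X -> Y) : Prop :=
  forall x, pos x -> pos (f x).

Definition is_morph (X Y : upog) (f : X -> Y) : Prop :=
  [/\ additive_fun f, order_pres f & f (ounit X) = ounit Y].

Definition MorU (X Y : upog) := {f : X -> Y | is_morph f}.

(* Tensor product in POG_u, given by its defining properties:                *)
Definition biadditive (X Y : zmodType) (V : zmodType) (b : X -> Y -> V) : Prop :=
  (forall x x' y, b (x + x') y = b x y + b x' y) /\
  (forall x y y', b x (y + y') = b x y + b x y').

Definition is_tensor (X Y T : upog) (t : X -> Y -> T) : Prop :=
  [/\ biadditive t,
      (forall (V : zmodType) (b : X -> Y -> V), biadditive b ->
         exists g : T -> V, [/\ additive_fun g,
           (forall x y, g (t x y) = b x y) &
           (forall g' : T -> V, additive_fun g' ->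
              (forall x y, g' (t x y) = b x y) -> g' = g)]),
      (forall z : T, pos z <->
         exists s : seq (X * Y),
           all (fun p => `[< pos p.1 /\ pos p.2 >]) s /\
           z = \sum_(p <- s) t p.1 p.2) &
      ounit T = t (ounit X) (ounit Y)].

Section HomH.
Variables (A B : upog) (h : A -> B).

Definition in_homh (f : A -> B) : Prop :=
  additive_fun f /\
  exists n : nat, order_pres (h *+ n - f) /\ order_pres (f + h *+ n).

Definition homh_pred : {pred A -> B} := fun f => `[< in_homh f >].

Lemma additive_fun0 (X Y : zmodType) (f : X -> Y) : additive_fun f -> f 0 = 0.
Proof. by move=> fa; apply: (@addrI _ (f 0)); rewrite -fa !addr0. Qed.

Lemma additive_funN (X Y : zmodType) (f : X -> Y) x : additive_fun f -> f (- x) = - f x.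
Proof.
move=> fa; have := fa x (- x); rewrite subrr additive_fun0 // => /esym/eqP.
by rewrite addrC addr_eq0 => /eqP.
Qed.

Lemma posMn (G : pog) (x : G) n : pos x -> pos (x *+ n).
Proof.
move=> px; elim: n => [|n IH]; first by rewrite mulr0n; apply: pos0.
by rewrite mulrS; apply: posD.
Qed.

Lemma homh_closed : zmod_closed homh_pred.
Proof.
split.
  apply/asboolP; split; first by move=> x y /=; rewrite addr0.
  exists 0%N; split=> x _; rewrite !(natmulfctE, fctE) /= mulr0n;
    have -> : (0 : A -> B) x = 0 by []; rewrite ?subr0 ?addr0; apply: pos0.
move=> f g /asboolP [fa [n [f1 f2]]] /asboolP [ga [m [g1 g2]]].
apply/asboolP; split.
  move=> x y; rewrite !fctE fa ga opprD !addrA; congr (_ + _).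
  by rewrite -!addrA; congr (_ + _); rewrite addrC.
exists (n + m)%N; split=> x px; rewrite !(natmulfctE, fctE) /=.
  have := posD (f1 x px) (g2 x px); rewrite !(natmulfctE, fctE) /=.
  suff -> : h x *+ (n + m) - (f x - g x) = h x *+ n - f x + (g x + h x *+ m) by [].
  by rewrite mulrnDr opprB addrACA [RHS]addrACA [- f x + _]addrC.
have := posD (f2 x px) (g1 x px); rewrite !(natmulfctE, fctE) /=.
suff -> : f x - g x + h x *+ (n + m) = f x + h x *+ n + (h x *+ m - g x) by [].
by rewrite mulrnDr addrACA [- g x + _]addrC.
Qed.

HB.instance Definition _ := GRing.isZmodClosed.Build (A -> B) homh_pred homh_closed.

Definition homh_t := {f : A -> B | f \in homh_pred}.
HB.instance Definition _ := [isSub for (@sval _ _ : homh_t -> (A -> B))].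
HB.instance Definition _ := [Choice of homh_t by <:].
HB.instance Definition _ := [SubChoice_isSubZmodule of homh_t by <:].


Definition homh_pos (f : homh_t) : Prop := order_pres (val f).

Lemma homh_pos0 : homh_pos 0.
Proof. by move=> x _ /=; have -> : (0 : A -> B) x = 0 by []; apply: pos0. Qed.

Lemma homh_posD f g : homh_pos f -> homh_pos g -> homh_pos (f + g).
Proof. by move=> pf pg x px; rewrite raddfD /=; apply: posD; [apply: pf|apply: pg]. Qed.

Lemma homh_add (f : homh_t) : additive_fun (val f).
Proof. by case: f => f /= /asboolP []. Qed.

Lemma homh_pos_anti f : homh_pos f -> homh_pos (- f) -> f = 0.
Proof.
move=> pf pN; apply: val_inj; rewrite raddf0 /=; apply/funext => x.
change ((0 : A -> B) x) with (0 : B).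
have fN y : pos y -> val f y = 0.
  move=> py; apply: pos_anti; first exact: pf.
  by have := pN y py; rewrite raddfN.
have [_ /(_ x) [n pn]] := ounitP A.
have pnu : pos (ounit A *+ n) by apply: posMn; case: (ounitP A).
have -> : x = ounit A *+ n - (ounit A *+ n - x) by rewrite opprB addrC subrK.
by rewrite homh_add (additive_funN _ (homh_add f)) fN // fN // subr0.
Qed.

Definition homh_pog : pog := @POG homh_t homh_pos homh_pos0 homh_posD homh_pos_anti.

End HomH.

Section HomHU.
Variables (A B : upog) (h : MorU A B).

Lemma homh_self : sval h \in homh_pred (sval h).
Proof.
case: h => f [fa fp fu] /=; apply/asboolP; split=> //.
exists 1%N; split=> x px; rewrite !(natmulfctE, fctE) /= mulr1n.
  by rewrite subrr; apply: pos0.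
by apply: posD; apply: fp.
Qed.

Definition homh_unit : homh_pog (sval h) := exist _ (sval h) homh_self.

Lemma homh_unitP : is_order_unit homh_unit.
Proof.
have [_ fp _] := svalP h; split; first exact: fp.
move=> g; case: (svalP g) => /asboolP [_ [n [gn _]]].
by exists n => x px; rewrite raddfB raddfMn /=; apply: gn.
Qed.

Definition homh_upog : upog := @UPOG (homh_pog (sval h)) homh_unit homh_unitP.

End HomHU.

Definition hval (A B : upog) (h : MorU A B) (f : homh_upog h) : A -> B :=
  val (f : homh_t (sval h)).

Definition UHom (A X B : upog) (i : A -> X) (h : A -> B) :=
  {g : X -> B | is_morph g /\ forall a, g (i a) = h a}.

Definition iota_t (A C T : upog) (t : A -> C -> T) : A -> T := fun a => t a (ounit C).

(** A morphism g : (A (x) C, u (x) w) -> (B, v) under (A, u) is the same thing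
  as a bimorphism b : A x C -> B with b(a, w) = h a, by the universal property
  of the tensor product together with the description of its positive cone.
  Currying such a b gives c |-> b(-, c), which lies in [A,B]_h because
  -n w <= c <= n w forces -n h <= b(-, c) <= n h; conversely an order-unit
  preserving morphism C -> [A,B]_h uncurries to such a bimorphism. *)
From HB Require Import structures.
From mathcomp Require Import all_boot all_algebra.
From mathcomp Require Import boolp classical_sets functions.

Set Implicit Arguments.
Unset Strict Implicit.
Unset Printing Implicit Defensive.
Import GRing.Theory.
Local Open Scope ring_scope.

Lemma sval_inj (X : Type) (P : X -> Prop) : injective (@sval X P).
Proof. by case=> x px [y py] /= exy; apply: eq_exist. Qed.

Section AdditiveFun.
Variables (X Y : zmodType) (f : X -> Y).
Hypothesis f_add : additive_fun f.

Lemma additive_funB x y : f (x - y) = f x - f y.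
Proof. by rewrite f_add (additive_funN _ f_add). Qed.

Lemma additive_funMn x n : f (x *+ n) = f x *+ n.
Proof.
elim: n => [|n IH]; first by rewrite !mulr0n (additive_fun0 f_add).
by rewrite !mulrS f_add IH.
Qed.

Lemma additive_fun_sum (I : Type) (s : seq I) (F : I -> X) :
  f (\sum_(i <- s) F i) = \sum_(i <- s) f (F i).
Proof.
elim: s => [|i s IH]; first by rewrite !big_nil (additive_fun0 f_add).
by rewrite !big_cons f_add IH.
Qed.

End AdditiveFun.

Lemma pos_sum (G : pog) (I : eqType) (s : seq I) (F : I -> G) :
  (forall i, i \in s -> pos (F i)) -> pos (\sum_(i <- s) F i).
Proof.
elim: s => [|i s IH] posF; first by rewrite big_nil; apply: pos0.
rewrite big_cons; apply: posD; first by apply: posF; rewrite mem_head.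
by apply: IH => j sj; apply: posF; rewrite inE sj orbT.
Qed.

Lemma morph_add (X Y : upog) (f : MorU X Y) : additive_fun (sval f).
Proof. by case: (svalP f). Qed.

Lemma morph_pos (X Y : upog) (f : MorU X Y) : order_pres (sval f).
Proof. by case: (svalP f). Qed.

Lemma morph_unit (X Y : upog) (f : MorU X Y) : sval f (ounit X) = ounit Y.
Proof. by case: (svalP f). Qed.

Section Tensor.
Variables (X Y T : upog) (t : X -> Y -> T).
Hypothesis Ht : is_tensor t.

Lemma tensorDl x x' y : t (x + x') y = t x y + t x' y.
Proof. by case: Ht => [[tD _] _ _ _]. Qed.

Lemma tensor_additive x : additive_fun (t x).
Proof. by case: Ht => [[_ tD] _ _ _] y y'; apply: tD. Qed.

Lemma tensor_pos x y : pos x -> pos y -> pos (t x y).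
Proof.
move=> px py; case: Ht => _ _ cone _; apply/cone; exists [:: (x, y)].
by rewrite big_seq1 /= andbT; split=> //; apply/asboolP.
Qed.

Lemma tensor_ounit : ounit T = t (ounit X) (ounit Y).
Proof. by case: Ht. Qed.

Lemma tensor_order_pres (V : pog) (g : T -> V) : additive_fun g ->
  (forall x y, pos x -> pos y -> pos (g (t x y))) -> order_pres g.
Proof.
move=> g_add g_pos z; case: Ht => _ _ cone _; case/cone=> s [/allP s_pos ->].
rewrite (additive_fun_sum g_add); apply: pos_sum => p /s_pos /asboolP [].
exact: g_pos.
Qed.

Lemma tensor_ext (V : zmodType) (g1 g2 : T -> V) :
  additive_fun g1 -> additive_fun g2 ->
  (forall x y, g1 (t x y) = g2 (t x y)) -> g1 = g2.
Proof.
move=> g1_add g2_add eg; case: Ht => _ univ _ _.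
have b_bi : biadditive (fun x y => g2 (t x y)).
  split=> [x x' y|x y y']; first by rewrite tensorDl g2_add.
  by rewrite tensor_additive g2_add.
have [g [_ _ g_uniq]] := univ V _ b_bi.
by rewrite (g_uniq g1 g1_add eg) (g_uniq g2 g2_add).
Qed.

Section Lift.
Variables (V : zmodType) (b : X -> Y -> V).
Hypothesis b_bi : biadditive b.

Lemma tensor_lift_exists :
  exists g : T -> V, additive_fun g /\ forall x y, g (t x y) = b x y.
Proof. by case: Ht => _ univ _ _; have [g [? ? _]] := univ V b b_bi; exists g. Qed.

Definition tensor_lift : T -> V := projT1 (cid tensor_lift_exists).

Lemma tensor_lift_additive : additive_fun tensor_lift.
Proof. by rewrite /tensor_lift; case: cid => ? []. Qed.

Lemma tensor_liftE x y : tensor_lift (t x y) = b x y.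
Proof. by rewrite /tensor_lift; case: cid => ? []. Qed.

End Lift.
End Tensor.

Definition is_bimorph_over (A C B : upog) (h : A -> B) (b : A -> C -> B) :=
  [/\ biadditive b,
      (forall a c, pos a -> pos c -> pos (b a c)) &
      forall a, b a (ounit C) = h a].

Lemma bimorph_biadditive (A C B : upog) (h : A -> B) (b : A -> C -> B) :
  is_bimorph_over h b -> biadditive b.
Proof. by case. Qed.

Section Curry.
Variables (A C B : upog) (h : MorU A B) (b : A -> C -> B).
Hypothesis bb : is_bimorph_over (sval h) b.

Lemma bimorph_homh c : (fun a => b a c) \in homh_pred (sval h).
Proof.
have [[bDl bDr] b_pos b_unit] := bb.
have ba a : additive_fun (b a) by move=> ??; apply: bDr.
have b_unitMnB a n c' : b a (ounit C *+ n - c') = sval h a *+ n - b a c'.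
  by rewrite (additive_funB (ba a)) (additive_funMn (ba a)) b_unit.
have [_ /(_ c) [n1 pn1]] := ounitP C.
have [_ /(_ (- c)) [n2 pn2]] := ounitP C.
apply/asboolP; split; first by move=> ??; apply: bDl.
exists (n1 + n2)%N; split=> a pa; rewrite !(natmulfctE, fctE) mulrnDr.
- have pos1 : pos (sval h a *+ n1 - b a c).
    by have := b_pos _ _ pa pn1; rewrite b_unitMnB.
  by rewrite addrAC; apply: posD pos1 (posMn _ (morph_pos _ pa)).
- have pos2 : pos (b a c + sval h a *+ n2).
    by rewrite addrC; have := b_pos _ _ pa pn2; rewrite b_unitMnB (additive_funN _ (ba a)) opprK.
  by rewrite addrCA addrC; apply: posD pos2 (posMn _ (morph_pos _ pa)).
Qed.

Definition curry_el (c : C) : homh_upog h :=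
  exist _ (fun a => b a c) (bimorph_homh c) : homh_t (sval h).

Lemma curry_morph : is_morph curry_el.
Proof.
have [[_ bDr] b_pos b_unit] := bb.
split.
- move=> c c'; apply: val_inj; apply/funext => a; exact: bDr.
- by move=> c pc a pa; apply: b_pos.
- by apply: val_inj; apply/funext => a; apply: b_unit.
Qed.

Definition curry_mor : MorU C (homh_upog h) := exist _ curry_el curry_morph.

End Curry.

Lemma uncurry_bimorph (A C B : upog) (h : MorU A B) (F : MorU C (homh_upog h)) :
  is_bimorph_over (sval h) (fun a c => hval (sval F c) a).
Proof.
split.
- split=> [a a' c|a c c']; first exact: homh_add.
  by rewrite (morph_add F) /hval raddfD.
- by move=> a c pa pc; apply: (morph_pos F).
- by move=> a; rewrite (morph_unit F).
Qed.

Lemma uhom_additive (A X B : upog) (i : A -> X) (h : A -> B) (g : UHom i h) :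
  additive_fun (sval g).
Proof. by case: (svalP g) => [[]]. Qed.

Section UnderTensor.
Variables (A C B : upog) (TC : upog) (t : A -> C -> TC) (h : MorU A B).
Hypothesis Ht : is_tensor t.

Lemma uhom_bimorph (g : UHom (iota_t t) (sval h)) :
  is_bimorph_over (sval h) (fun a c => sval g (t a c)).
Proof.
have [[g_add g_pos _] g_iota] := svalP g.
split=> //.
- split=> [a a' c|a c c']; first by rewrite (tensorDl Ht) g_add.
  by rewrite (tensor_additive Ht) g_add.
- by move=> a c pa pc; apply/g_pos/tensor_pos.
Qed.

Lemma lift_uhom_subproof (b : A -> C -> B) (bb : is_bimorph_over (sval h) b) :
  let g := tensor_lift Ht (bimorph_biadditive bb) in
  is_morph g /\ forall a, g (iota_t t a) = sval h a.
Proof.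
have [_ b_pos b_unit] := bb; rewrite /=.
have g_add := tensor_lift_additive Ht (bimorph_biadditive bb).
split; last by move=> a; rewrite /iota_t tensor_liftE.
split=> //.
- by apply: (tensor_order_pres Ht) => // a c pa pc; rewrite tensor_liftE; apply: b_pos.
- by rewrite (tensor_ounit Ht) tensor_liftE b_unit (morph_unit h).
Qed.

Definition lift_uhom b (bb : is_bimorph_over (sval h) b) : UHom (iota_t t) (sval h) :=
  exist _ _ (lift_uhom_subproof bb).

Lemma lift_uhomE b (bb : is_bimorph_over (sval h) b) a c :
  sval (lift_uhom bb) (t a c) = b a c.
Proof. exact: tensor_liftE. Qed.

Definition transpose_uhom (g : UHom (iota_t t) (sval h)) : MorU C (homh_upog h) :=
  curry_mor (uhom_bimorph g).

Definition untranspose_uhom (F : MorU C (homh_upog h)) : UHom (iota_t t) (sval h) :=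
  lift_uhom (uncurry_bimorph F).

Lemma transpose_uhomK : cancel transpose_uhom untranspose_uhom.
Proof.
move=> g; apply: sval_inj.
by apply: (tensor_ext Ht (uhom_additive _) (uhom_additive _)) => a c; rewrite lift_uhomE.
Qed.

Lemma untranspose_uhomK : cancel untranspose_uhom transpose_uhom.
Proof.
move=> F; apply: sval_inj; apply/funext => c; apply: val_inj; apply/funext => a.
exact: lift_uhomE.
Qed.

End UnderTensor.

Theorem theorem4p7 (A : upog)
    (T : upog -> upog) (t : forall C : upog, A -> C -> T C)
    (HT : forall C : upog, is_tensor (t C)) :
  exists Phi : forall (C B : upog) (h : MorU A B),
      UHom (iota_t (t C)) (sval h) -> MorU C (homh_upog h),
    [/\ (forall (C B : upog) (h : MorU A B), bijective (Phi C B h)),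
        (forall (C C' B : upog) (h : MorU A B) (k : MorU C' C) (m : MorU (T C') (T C)),
           (forall a c', sval m (t C' a c') = t C a (sval k c')) ->
           forall (g : UHom (iota_t (t C)) (sval h)) (g' : UHom (iota_t (t C')) (sval h)),
             sval g' = sval g \o sval m ->
             sval (Phi C' B h g') = sval (Phi C B h g) \o sval k) &
        (forall (C B B' : upog) (h : MorU A B) (h' : MorU A B') (k : MorU B B'),
           (forall a, sval k (sval h a) = sval h' a) ->
           forall (g : UHom (iota_t (t C)) (sval h)) (g' : UHom (iota_t (t C)) (sval h')),
             sval g' = sval k \o sval g ->
             forall c : C, hval (sval (Phi C B' h' g') c) = sval k \o hval (sval (Phi C B h g) c))].
Proof.
exists (fun C B h => @transpose_uhom A C B (T C) (t C) h (HT C)); split.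
- move=> C B h; exists (untranspose_uhom (HT C) (h := h)).
    exact: transpose_uhomK.
  exact: untranspose_uhomK.
- move=> C C' B h k m m_t g g' g'E; apply/funext => c'.
  by apply: val_inj; apply/funext => a /=; rewrite g'E /= m_t.
- by move=> C B B' h h' k _ g g' g'E c; apply/funext => a; rewrite /hval /= g'E.
Qed.
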